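(* For all integers $n\ge 3$ and $1<k<n$, the edge connectivity of $G=H_B(n,k)$ is $\lambda(G)=1$.
   Context: Fix integers $n\ge 2$ and $1\le k<n$ and positive real numbers $x_1<x_2<\dots<x_n$. Let $\mathscr{B}_n=\{\pm x_1,\pm x_2,\dots,\pm x_{n-1},x_n\}$ (so $-x_n\notin\mathscr{B}_n$). Let $\phi(\mathscr{B}_n)$ be the family of all nonempty subsets $S\subseteq\mathscr{B}_n$ whose elements have pairwise distinct absolute values and whose element of largest absolute value is positive. Let $\mathscr{B}_n^+=\{x_1,\dots,x_n\}$, let $V_1$ be the set of all $k$-element subsets of $\mathscr{B}_n^+$, and let $V_2=\phi(\mathscr{B}_n)\setminus V_1$. For $A\in\phi(\mathscr{B}_n)$ put $A^\dagger=\{|a|:a\in A\}$. The bipartite Kneser B type-$k$ graph $H_B(n,k)$ is the simple graph with vertex set $V_1\cup V_2$ in which $X\in V_1$ and $Y\in V_2$ are adjacent if and only if $X\subseteq Y^\dagger$ or $Y^\dagger\subseteq X$, and there are no other edges. *)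

From mathcomp Require Import all_boot.
Set Implicit Arguments. Unset Strict Implicit. Unset Printing Implicit Defensive.

(* Encoding: the element x_(i+1) of B_n is (i, false) and -x_(i+1) is (i, true),
   for i : 'I_n.  The absolute value of (i,b) is (the index of) x_(i+1), i.e. i;
   since 0 < x_1 < ... < x_n, comparing absolute values = comparing indices. *)
Definition elt n := ('I_n * bool)%type.

(* a is a member of B_n : everything except -x_n *)
Definition inB n (a : elt n) : bool := ~~ (a.2 && (val a.1 == n.-1)).

Definition inPhi n (S : {set elt n}) : bool :=
  [&& S != set0,
      [forall a in S, inB a],
      [forall a in S, forall b in S, (a.1 == b.1) ==> (a == b)] &
      [forall a in S, [forall b in S, (b.1 <= a.1)%N] ==> ~~ a.2]].

Definition HBvert n := {S : {set elt n} | inPhi S}.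

Definition dag n (S : {set elt n}) : {set 'I_n} := [set a.1 | a in S].

Definition inV1 n k (S : {set elt n}) : bool :=
  [forall a in S, ~~ a.2] && (#|S| == k).

Definition adjV1V2 n k (X Y : {set elt n}) : bool :=
  [&& inV1 k X, ~~ inV1 k Y & (dag X \subset dag Y) || (dag Y \subset dag X)].

Definition HB_adj n k : rel (HBvert n) :=
  fun X Y => adjV1V2 k (val X) (val Y) || adjV1V2 k (val Y) (val X).

Definition connectedb (V : finType) (e : rel V) : bool :=
  [forall x, forall y, connect e x y].

Definition edge_del (V : finType) (e : rel V) (F : {set V * V}) : rel V :=
  fun x y => [&& e x y, (x, y) \notin F & (y, x) \notin F].

Definition edge_connectivity (V : finType) (e : rel V) : nat :=
  \big[minn/#|[set: V * V]|]_(F : {set V * V} | ~~ connectedb (edge_del e F)) #|F|.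

Arguments HB_adj : clear implicits.

(* H_B(n,k) is connected: the vertex {x_1, ..., x_n} lies in V_2 (as k < n) and is adjacent
   to every vertex of V_1, while every vertex of V_2 is comparable with some k-subset of
   B_n^+.  On the other hand, for a k-subset D of indices and a non-maximal j in D, the
   vertex obtained from {x_i : i in D} by negating x_j lies in V_2 and its only neighbour
   is {x_i : i in D}, since the dagger of a neighbour must be a k-set comparable with D.
   Deleting that single edge isolates it, so the edge connectivity is 1. *)

From HB Require Import structures.
From mathcomp Require Import all_boot.
Set Implicit Arguments. Unset Strict Implicit. Unset Printing Implicit Defensive.

HB.instance Definition _ := SemiGroup.isComLaw.Build nat minn minnA minnC.

Section EdgeConnectivity.

Variable V : finType.

Lemma eq_connectedb (e1 e2 : rel V) : e1 =2 e2 -> connectedb e1 = connectedb e2.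
Proof.
by move=> e12; apply: eq_forallb => x; apply: eq_forallb => y; rewrite (eq_connect e12).
Qed.

Variable e : rel V.

Lemma edge_del_set0 : edge_del e set0 =2 e.
Proof. by move=> x y; rewrite /edge_del !in_set0 !andbT. Qed.

Lemma connectedb_hub (z : V) :
  symmetric e -> (forall x, connect e x z) -> connectedb e.
Proof.
move=> e_sym to_z; apply/forallP => x; apply/forallP => y.
by apply: connect_trans (to_z x) _; rewrite (sym_connect_sym e_sym).
Qed.

(* Deleting the edge (x, y) removes both orientations, so a vertex whose only
   neighbour is x becomes isolated. *)
Lemma edge_del_pendant_disconnected (x y z : V) :
  (forall w, e y w -> w = x) -> y != z -> ~~ connectedb (edge_del e [set (x, y)]).
Proof.
move=> y_nbr y_neq_z; apply/negP => /forallP /(_ y) /forallP /(_ z) /connectP [].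
case=> [_ /= y_eq_z | w p /= /andP [/and3P [e_yw _ wy_notin] _] _].
  by rewrite y_eq_z eqxx in y_neq_z.
by rewrite (y_nbr _ e_yw) in_set1 eqxx in wy_notin.
Qed.

Lemma edge_connectivity_eq1 (x y : V) :
  connectedb e -> ~~ connectedb (edge_del e [set (x, y)]) -> edge_connectivity e = 1.
Proof.
move=> e_conn cut_xy; apply/eqP; rewrite eqn_leq; apply/andP; split.
  by rewrite /edge_connectivity -(cards1 (x, y)) (bigD1 [set (x, y)] cut_xy) geq_minl.
apply: (big_ind (fun m => 0 < m)).
- by apply/card_gt0P; exists (x, y).
- by move=> a b a_gt0 b_gt0; rewrite leq_min a_gt0 b_gt0.
move=> F; rewrite lt0n; apply: contra => /eqP /cards0_eq ->.
by rewrite (eq_connectedb edge_del_set0).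
Qed.

End EdgeConnectivity.

Lemma exists_card_comparable_set (T : finType) (A : {set T}) (k : nat) :
  k <= #|T| -> exists D : {set T}, #|D| = k /\ (D \subset A \/ A \subset D).
Proof.
move=> k_le_T; set s := enum A ++ enum (~: A).
have s_uniq : uniq s.
  rewrite cat_uniq !enum_uniq /= andbT; apply/hasPn => x.
  by rewrite !mem_enum inE => ->.
have size_s : size s = #|T| by rewrite size_cat -!cardE cardsC.
exists [set x in take k s]; split.
  rewrite cardsE; move/card_uniqP: (take_uniq k s_uniq) => ->.
  by rewrite size_take size_s; case: ltnP => // T_le_k; apply/eqP; rewrite eqn_leq T_le_k.
rewrite /s take_cat -cardE; case: ltnP => _.
  by left; apply/subsetP => x; rewrite inE => /mem_take; rewrite mem_enum.
by right; apply/subsetP => x xA; rewrite inE mem_cat mem_enum xA.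
Qed.

Lemma card_widen_ord_set (m n : nat) (m_le_n : m <= n) :
  #|[set widen_ord m_le_n i | i : 'I_m]| = m.
Proof. by rewrite card_imset ?card_ord // => i j /(congr1 val) /= /val_inj. Qed.

Section HBGraph.

Variables n k : nat.

Definition pos_set (D : {set 'I_n}) : {set elt n} := [set (i, false) | i in D].

Lemma dag_pos_set (D : {set 'I_n}) : dag (pos_set D) = D.
Proof. by rewrite /dag /pos_set -imset_comp imset_id. Qed.

Lemma card_pos_set (D : {set 'I_n}) : #|pos_set D| = #|D|.
Proof. by rewrite card_imset // => i j []. Qed.

Lemma inV1_pos_set (D : {set 'I_n}) : inV1 k (pos_set D) = (#|D| == k).
Proof.
rewrite /inV1 card_pos_set; case: eqP; rewrite ?andbF ?andbT //.
by move=> _; apply/forall_inP => a /imsetP [i _ ->].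
Qed.

Lemma pos_set_phi (D : {set 'I_n}) : D != set0 -> inPhi (pos_set D).
Proof.
move=> /set0Pn [i iD]; apply/and4P; split.
- by apply/set0Pn; exists (i, false); apply: imset_f.
- by apply/forall_inP => a /imsetP [j _ ->].
- apply/forall_inP => a /imsetP [j _ ->]; apply/forall_inP => b /imsetP [l _ ->] /=.
  by apply/implyP => /eqP ->.
- by apply/forall_inP => a /imsetP [j _ ->]; rewrite implybT.
Qed.

Definition pos_vert (D : {set 'I_n}) (D_nz : D != set0) : HBvert n :=
  exist _ (pos_set D) (pos_set_phi D_nz).

Lemma pos_set_dag (S : {set elt n}) : [forall a in S, ~~ a.2] -> S = pos_set (dag S).
Proof.
move=> /forall_inP S_pos; apply/setP => [[i b]]; apply/idP/imsetP.
  move=> iS; exists i; first by apply/imsetP; exists (i, b).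
  by have /negbTE /= -> := S_pos _ iS.
case=> _ /imsetP [[i' b'] i'S /= ->] [-> ->].
by have /negbTE /= <- := S_pos _ i'S.
Qed.

Lemma card_dag (S : {set elt n}) : inPhi S -> #|dag S| = #|S|.
Proof.
case/and4P => _ _ /forall_inP S_abs_inj _; rewrite card_in_imset // => a b aS bS ab.
by apply/eqP; move/forall_inP: (S_abs_inj a aS) => /(_ b bS) /implyP; apply; rewrite ab.
Qed.

Lemma HB_adj_sym : symmetric (HB_adj n k).
Proof. by move=> X Y; rewrite /HB_adj orbC. Qed.

Section Hub.

Hypotheses (k_gt0 : 0 < k) (k_lt_n : k < n).

Let setT_nz : [set: 'I_n] != set0.
Proof. by apply/set0Pn; exists (Ordinal (leq_ltn_trans (leq0n k) k_lt_n)). Qed.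

Let hub := pos_vert setT_nz.

Lemma HB_adj_V1_hub (X : HBvert n) : inV1 k (val X) -> HB_adj n k X hub.
Proof.
move=> X_V1; apply/orP; left.
by rewrite /adjV1V2 X_V1 inV1_pos_set cardsT card_ord (gtn_eqF k_lt_n) dag_pos_set subsetT.
Qed.

Lemma connect_HB_hub (X : HBvert n) : connect (HB_adj n k) X hub.
Proof.
case X_V1: (inV1 k (val X)); first exact/connect1/HB_adj_V1_hub.
have [|D [card_D D_cmp]] := @exists_card_comparable_set _ (dag (val X)) k.
  by rewrite card_ord ltnW.
have D_nz : D != set0 by rewrite -card_gt0 card_D.
apply: (connect_trans (y := pos_vert D_nz)); apply: connect1; last first.
  by apply: HB_adj_V1_hub; rewrite /= inV1_pos_set card_D.
apply/orP; right; rewrite /adjV1V2 /= inV1_pos_set card_D eqxx X_V1 dag_pos_set.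
by case: D_cmp => ->; rewrite ?orbT.
Qed.

Lemma HB_connected : connectedb (HB_adj n k).
Proof. exact: connectedb_hub HB_adj_sym connect_HB_hub. Qed.

End Hub.

Section Pendant.

Variables (D : {set 'I_n}) (j l : 'I_n).
Hypotheses (card_D : #|D| = k) (jD : j \in D) (lD : l \in D) (j_lt_l : j < l).

Definition pendant : {set elt n} := [set (i, i == j) | i in D].

Lemma dag_pendant : dag pendant = D.
Proof.
apply/setP => i; apply/imsetP/idP; first by case=> _ /imsetP [i' i'D ->] ->.
by move=> iD; exists (i, i == j) => //; apply: imset_f.
Qed.

Lemma neg_j_in_pendant : (j, true) \in pendant.
Proof. by rewrite -[true](eqxx j); apply: imset_f. Qed.

Lemma pendant_phi : inPhi pendant.
Proof.
apply/and4P; split.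
- by apply/set0Pn; exists (j, true); apply: neg_j_in_pendant.
- apply/forall_inP => _ /imsetP [i _ ->]; rewrite /inB /=.
  case: eqP => //= ->; rewrite neq_ltn; apply/orP; left.
  by rewrite ltn_predRL (leq_ltn_trans j_lt_l).
- apply/forall_inP => _ /imsetP [i _ ->]; apply/forall_inP => _ /imsetP [i' _ ->] /=.
  by apply/implyP => /eqP ->.
- apply/forall_inP => _ /imsetP [i _ ->] /=; apply/implyP => /forall_inP i_max.
  apply/negP => /eqP i_eq_j; move: (i_max _ (imset_f (fun i => (i, i == j)) lD)).
  by rewrite /= i_eq_j leqNgt j_lt_l.
Qed.

Definition pendant_vert : HBvert n := exist _ pendant pendant_phi.

Lemma pendant_notV1 : ~~ inV1 k pendant.
Proof. by apply/nandP; left; apply/forall_inP => /(_ _ neg_j_in_pendant). Qed.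

Let D_nz : D != set0.
Proof. by apply/set0Pn; exists j. Qed.

Lemma pendant_neq_pos_vert (E : {set 'I_n}) (E_nz : E != set0) :
  pendant_vert != pos_vert E_nz.
Proof.
apply/negP => /eqP /(congr1 val) /= pendant_pos.
by move: neg_j_in_pendant; rewrite pendant_pos => /imsetP [i _ []].
Qed.

(* A neighbour X lies in V_1, so dag X is a k-set comparable with D, i.e. D itself. *)
Lemma pendant_nbr (X : HBvert n) : HB_adj n k pendant_vert X -> X = pos_vert D_nz.
Proof.
rewrite /HB_adj /adjV1V2 /= (negbTE pendant_notV1) /= => /andP [X_V1 dag_cmp].
have card_dag_X : #|dag (val X)| = k.
  by rewrite card_dag ?(valP X) //; case/andP: X_V1 => _ /eqP.
have dag_X : dag (val X) = D.
  rewrite dag_pendant in dag_cmp; apply/eqP.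
  case/orP: dag_cmp => sub; first by rewrite eqEcard sub card_dag_X card_D leqnn.
  by rewrite eq_sym eqEcard sub card_dag_X card_D leqnn.
apply: val_inj; rewrite /= -dag_X; apply: pos_set_dag.
by case/andP: X_V1.
Qed.

Lemma pendant_cut :
  ~~ connectedb (edge_del (HB_adj n k) [set (pos_vert D_nz, pendant_vert)]).
Proof. exact: edge_del_pendant_disconnected pendant_nbr (pendant_neq_pos_vert D_nz). Qed.

End Pendant.

End HBGraph.

(* The hypothesis 3 <= n is implied by 1 < k < n. *)
Theorem mainTheorem7 (n k : nat) :
  (3 <= n)%N -> (1 < k < n)%N -> edge_connectivity (HB_adj n k) = 1%N.
Proof.
move=> _ /andP [k_gt1 k_lt_n].
have k_gt0 := ltnW k_gt1; have k_le_n := ltnW k_lt_n.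
pose j := widen_ord k_le_n (Ordinal k_gt0).
pose l := widen_ord k_le_n (Ordinal k_gt1).
have inD (i : 'I_k) : widen_ord k_le_n i \in [set widen_ord k_le_n i | i : 'I_k].
  exact: imset_f.
apply: (edge_connectivity_eq1 (HB_connected k_gt0 k_lt_n)).
exact: (@pendant_cut n k _ j l (card_widen_ord_set k_le_n) (inD _) (inD _)).
Qed.
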